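(* Let $A,B\in \mathbb{R}^{m\times n}$ with $m<n$ and let $1\le p\le\infty$. Suppose $A = M_A - N_A$ with $M_A,N_A\in\mathbb{R}^{m\times n}$, $\operatorname{rank}(M_A) = m$, and $\|M_A^\dagger N_A\|_p+ \|M_A^\dagger B\|_p < 1.$ Then for any given $b\in\mathbb{R}^m$, the equation $x = M_A^\dagger\left(N_A x + B|x|+b\right)$ in $x\in\mathbb{R}^n$ has a unique solution, and that solution also satisfies the generalized absolute value equation $Ax-B|x|=b$.
   Context: $M^\dagger$ denotes the Moore–Penrose inverse of $M$. $|x|$ denotes the entrywise absolute value of $x\in\mathbb{R}^n$. $\|\cdot\|_p$ on matrices denotes the operator norm induced by the vector $p$-norm. *)

From HB Require Import structures.
From mathcomp Require Import all_boot all_order all_algebra.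
From mathcomp Require Import all_classical all_reals all_analysis.
Set Implicit Arguments. Unset Strict Implicit. Unset Printing Implicit Defensive.
Import Order.TTheory GRing.Theory Num.Theory.
Local Open Scope ring_scope.
Local Open Scope classical_set_scope.

Definition is_mpinv (R : realType) (m n : nat) (M : 'M[R]_(m, n)) (X : 'M[R]_(n, m)) : Prop :=
  [/\ M *m X *m M = M, X *m M *m X = X, (M *m X)^T = M *m X & (X *m M)^T = X *m M].

(* The Moore-Penrose inverse M^dagger (unique, exists for every real matrix). *)
Definition mpinv (R : realType) (m n : nat) (M : 'M[R]_(m, n)) : 'M[R]_(n, m) :=
  xget 0 [set X | is_mpinv M X].

Definition absv (R : realType) (n : nat) (x : 'cV[R]_n) : 'cV[R]_n :=
  map_mx (fun a => `|a|) x.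

Definition vpnorm (R : realType) (p : \bar R) (n : nat) (x : 'cV[R]_n) : R :=
  match p with
  | EFin r => (\sum_(i < n) `|x i 0| `^ r) `^ r^-1
  | _ => \big[Num.max/0]_(i < n) `|x i 0|
  end.

Definition opnorm (R : realType) (p : \bar R) (k n : nat) (M : 'M[R]_(k, n)) : R :=
  sup [set vpnorm p (M *m x) / vpnorm p x | x in [set x : 'cV[R]_n | x != 0]].

From HB Require Import structures.
From mathcomp Require Import all_boot all_order all_algebra.
From mathcomp Require Import all_classical all_reals all_analysis.
Set Implicit Arguments. Unset Strict Implicit. Unset Printing Implicit Defensive.
Import Order.TTheory GRing.Theory Num.Theory.
Local Open Scope ring_scope.

(* Write q := ||M^+ N||_p + ||M^+ B||_p < 1. Since | |x| - |y| | <= |x - y|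
   entrywise and the p-norm is monotone in the moduli of the entries, the map
   x |-> M^+ (N x + B|x| + b) is q-Lipschitz for the p-norm, hence has a unique
   fixed point. Full row rank gives M M^+ = I, so multiplying the fixed-point
   equation by M yields (M - N) x - B|x| = b. Banach's theorem is applied in
   the max norm: by equivalence of norms on R^n some iterate of the map is a
   contraction for it, and the unique fixed point of that iterate is fixed by
   the map itself. *)

Lemma ereal_ge1_cases (R : realType) (p : \bar R) : (1 <= p)%E ->
  p = +oo%E \/ exists2 r : R, p = r%:E & 1 <= r.
Proof.
case: p => [r||]; [by rewrite lee_fin; right; exists r | by left | by []].
Qed.

Lemma powRK (R : realType) (a r : R) : 0 <= a -> r != 0 -> (a `^ r) `^ r^-1 = a.
Proof. by move=> a0 r0; rewrite -powRrM mulfV // powRr1. Qed.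

Section mx_norm_entries.
Variable R : realDomainType.

Lemma entry_le_mx_norm m n (x : 'M[R]_(m, n)) i j : `|x i j| <= `|x|.
Proof. by rewrite [leRHS]mx_normrE; exact: (le_bigmax _ _ (i, j)). Qed.

Lemma mx_norm_le m n (x : 'M[R]_(m, n)) c :
  0 <= c -> (forall i j, `|x i j| <= c) -> `|x| <= c.
Proof.
by move=> c0 xc; rewrite [leLHS]mx_normrE; apply: bigmax_le => // -[i j].
Qed.

Lemma mx_norm_mulmx_le m n l (M : 'M[R]_(m, n)) (x : 'M[R]_(n, l)) :
  `|M *m x| <= n%:R * `|M| * `|x|.
Proof.
apply: mx_norm_le => [|i j]; first by rewrite !mulr_ge0.
rewrite mxE (le_trans (ler_norm_sum _ _ _)) //.
apply: le_trans (_ : \sum_(k < n) `|M| * `|x| <= _).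
  apply: ler_sum => k _; rewrite normrM.
  by apply: ler_pM; rewrite ?normr_ge0 ?entry_le_mx_norm.
by rewrite sumr_const card_ord -mulrA mulr_natl.
Qed.

End mx_norm_entries.

Section finite_exponent.
Variables (R : realType) (r : R).
Hypothesis r_ge1 : 1 <= r.

Let r_gt0 : 0 < r. Proof. exact: lt_le_trans ltr01 r_ge1. Qed.
Let r_ge0 : 0 <= r. Proof. exact: ltW. Qed.
Let rV_ge0 : 0 <= r^-1. Proof. by rewrite invr_ge0. Qed.

(* Minkowski's inequality for [vpnorm] is that of [Lnorm] for the counting
   measure on [nat]. *)
Definition seq_of_cV k (x : 'cV[R]_k) (i : nat) : R :=
  if (insub i : option 'I_k) is Some j then x j 0 else 0.

Lemma seq_of_cVD k (x y : 'cV[R]_k) :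
  seq_of_cV (x + y) = (seq_of_cV x \+ seq_of_cV y)%R.
Proof.
apply/funext => i; rewrite /seq_of_cV /=.
by case: insub => [j|]; rewrite ?mxE ?addr0.
Qed.

Lemma vpnorm_Lnorm_counting k (x : 'cV[R]_k) :
  (vpnorm r%:E x)%:E = ('N[counting]_r%:E[EFin \o seq_of_cV x])%E.
Proof.
rewrite Lnorm_counting // (nneseries_split 0 k) ?add0n; last first.
  by move=> *; rewrite poweR_ge0.
rewrite eseries0 ?adde0; last first.
  move=> i ki _; rewrite /= /seq_of_cV insubF ?normr0 ?powR0 ?gt_eqF //.
  by rewrite ltnNge ki.
rewrite big_mkord; under eq_bigr => i _ do rewrite /= /seq_of_cV valK.
by rewrite sumEFin poweR_EFin.
Qed.

Lemma ler_vpnormD_fin k (x y : 'cV[R]_k) :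
  vpnorm r%:E (x + y) <= vpnorm r%:E x + vpnorm r%:E y.
Proof.
rewrite -lee_fin EFinD !vpnorm_Lnorm_counting seq_of_cVD.
exact: minkowski_EFin.
Qed.

Lemma le_vpnorm_fin k (x y : 'cV[R]_k) : (forall i, `|x i 0| <= `|y i 0|) ->
  vpnorm r%:E x <= vpnorm r%:E y.
Proof.
move=> xy; apply: ge0_ler_powR; rewrite ?nnegrE ?sumr_ge0 //;
  do ?by move=> i _; rewrite powR_ge0.
by apply: ler_sum => i _; apply: ge0_ler_powR; rewrite ?nnegrE.
Qed.

Lemma entry_le_vpnorm_fin k (x : 'cV[R]_k) i : `|x i 0| <= vpnorm r%:E x.
Proof.
rewrite -[leLHS](powRK (normr_ge0 _) (lt0r_neq0 r_gt0)).
apply: ge0_ler_powR; rewrite ?nnegrE ?powR_ge0 ?sumr_ge0 //;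
  do ?by move=> j _; rewrite powR_ge0.
by rewrite (bigD1 i) //= lerDl sumr_ge0 // => j _; rewrite powR_ge0.
Qed.

Lemma vpnorm_le_mx_norm_fin k (x : 'cV[R]_k) :
  vpnorm r%:E x <= k%:R `^ r^-1 * `|x|.
Proof.
rewrite -[X in _ * X](powRK (normr_ge0 x) (lt0r_neq0 r_gt0)).
rewrite -powRM ?powR_ge0 //.
apply: ge0_ler_powR; rewrite ?nnegrE ?mulr_ge0 ?powR_ge0 ?sumr_ge0 //;
  do ?by move=> j _; rewrite powR_ge0.
apply: le_trans (_ : \sum_(i < k) `|x| `^ r <= _).
  apply: ler_sum => i _; apply: ge0_ler_powR; rewrite ?nnegrE //.
  exact: entry_le_mx_norm.
by rewrite sumr_const card_ord mulr_natl.
Qed.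

End finite_exponent.

Section vector_pnorm.
Variables (R : realType) (p : \bar R).
Hypothesis p_ge1 : (1 <= p)%E.

Lemma vpnorm_ge0 k (x : 'cV[R]_k) : 0 <= vpnorm p x.
Proof.
case/ereal_ge1_cases: p_ge1 => [->|[r -> _]]; first exact: bigmax_ge_id.
exact: powR_ge0.
Qed.

Lemma entry_le_vpnorm k (x : 'cV[R]_k) i : `|x i 0| <= vpnorm p x.
Proof.
case/ereal_ge1_cases: p_ge1 => [->|[r -> r1]]; last exact: entry_le_vpnorm_fin.
exact: (le_bigmax _ (fun j => `|x j 0|)).
Qed.

Lemma le_vpnorm k (x y : 'cV[R]_k) : (forall i, `|x i 0| <= `|y i 0|) ->
  vpnorm p x <= vpnorm p y.
Proof.
case/ereal_ge1_cases: p_ge1 => [->|[r -> r1]] xy; last exact: le_vpnorm_fin.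
exact: le_bigmax2.
Qed.

Lemma ler_vpnormD k (x y : 'cV[R]_k) :
  vpnorm p (x + y) <= vpnorm p x + vpnorm p y.
Proof.
case/ereal_ge1_cases: p_ge1 => [->|[r -> r1]]; last exact: ler_vpnormD_fin.
apply: bigmax_le => [|i _]; first by rewrite addr_ge0 ?bigmax_ge_id.
rewrite mxE (le_trans (ler_normD _ _)) // lerD //.
  exact: (le_bigmax _ (fun j => `|x j 0|)).
exact: (le_bigmax _ (fun j => `|y j 0|)).
Qed.

Lemma mx_norm_le_vpnorm k (x : 'cV[R]_k) : `|x| <= vpnorm p x.
Proof.
apply: mx_norm_le => [|i j]; first exact: vpnorm_ge0.
by rewrite (ord1 j); exact: entry_le_vpnorm.
Qed.

Lemma vpnorm_le_mx_norm k :
  exists2 K, 0 <= K & forall x : 'cV[R]_k, vpnorm p x <= K * `|x|.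
Proof.
case/ereal_ge1_cases: p_ge1 => [->|[r -> r1]].
  exists 1 => // x; rewrite mul1r; apply: bigmax_le => // i _.
  exact: entry_le_mx_norm.
by exists (k%:R `^ r^-1); [exact: powR_ge0 | exact: vpnorm_le_mx_norm_fin].
Qed.

Lemma vpnorm_le0 k (x : 'cV[R]_k) : (vpnorm p x <= 0) = (x == 0).
Proof.
apply/idP/eqP => [x0|->].
  by apply/eqP; rewrite -normr_le0 (le_trans (mx_norm_le_vpnorm x)).
have [K _ /(_ 0)] := vpnorm_le_mx_norm k.
by rewrite normr0 mulr0.
Qed.

Lemma vpnorm0 k : vpnorm p (0 : 'cV[R]_k) = 0.
Proof. by apply/eqP; rewrite eq_le vpnorm_le0 eqxx vpnorm_ge0. Qed.

Lemma vpnorm_gt0 k (x : 'cV[R]_k) : x != 0 -> 0 < vpnorm p x.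
Proof. by rewrite -vpnorm_le0 -ltNge. Qed.

Lemma vpnorm_absvB k (x y : 'cV[R]_k) :
  vpnorm p (absv x - absv y) <= vpnorm p (x - y).
Proof. by apply: le_vpnorm => i; rewrite !mxE ler_dist_dist. Qed.

End vector_pnorm.

Section operator_norm.
Variables (R : realType) (p : \bar R).
Hypothesis p_ge1 : (1 <= p)%E.

Lemma opnorm_ubound k l (M : 'M[R]_(k, l)) :
  has_ubound
    [set vpnorm p (M *m x) / vpnorm p x | x in [set x : 'cV[R]_l | x != 0]].
Proof.
have [K K0 hK] := vpnorm_le_mx_norm p_ge1 k.
exists (K * (l%:R * `|M|)) => _ [x /= x0 <-].
rewrite ler_pdivrMr ?vpnorm_gt0 // (le_trans (hK _)) // -mulrA ler_wpM2l //.
rewrite (le_trans (mx_norm_mulmx_le _ _)) // ler_wpM2l ?mulr_ge0 //.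
exact: mx_norm_le_vpnorm.
Qed.

Lemma ler_opnorm k l (M : 'M[R]_(k, l)) (x : 'cV[R]_l) :
  vpnorm p (M *m x) <= opnorm p M * vpnorm p x.
Proof.
have [->|x0] := eqVneq x 0.
  by rewrite mulmx0 !vpnorm0 // mulr0.
rewrite -ler_pdivrMr ?vpnorm_gt0 //.
by apply: ub_le_sup; [exact: opnorm_ubound | exists x].
Qed.

Lemma opnorm_ge0 k l (M : 'M[R]_(k, l)) : 0 <= opnorm p M.
Proof.
rewrite /opnorm; set S := (X in sup X).
have [S0|/set0P[y Sy]] := eqVneq S set0; first by rewrite S0 sup0.
apply: le_trans (ub_le_sup (opnorm_ubound M) Sy).
by case: Sy => x _ <-; rewrite divr_ge0 ?vpnorm_ge0.
Qed.

End operator_norm.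

Lemma row_mulmx_tr_eq0 (R : realDomainType) n (w : 'rV[R]_n) :
  w *m w^T = 0 -> w = 0.
Proof.
move=> /matrixP /(_ 0 0); rewrite !mxE => /eqP.
under eq_bigr do rewrite mxE -expr2.
rewrite psumr_eq0 => [/allP w0|i _]; last exact: sqr_ge0.
apply/rowP => j; apply/eqP; rewrite mxE -sqrf_eq0.
exact: w0 (mem_index_enum j).
Qed.

Lemma row_free_mulmx_tr_unit (R : realFieldType) m n (M : 'M[R]_(m, n)) :
  row_free M -> M *m M^T \in unitmx.
Proof.
move=> Mfree; rewrite -row_free_unit; apply: inj_row_free => v vMMT0.
apply: (row_free_inj Mfree); rewrite mul0mx; apply: row_mulmx_tr_eq0.
by rewrite trmx_mul mulmxA -(mulmxA v) vMMT0 mul0mx.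
Qed.

Lemma mulmx_mpinv (R : realType) m n (M : 'M[R]_(m, n)) :
  row_free M -> M *m mpinv M = 1%:M.
Proof.
move=> Mfree; have MMT_unit := row_free_mulmx_tr_unit Mfree.
pose X := M^T *m invmx (M *m M^T).
have MX : M *m X = 1%:M by rewrite mulmxA mulmxV.
have [MXM _ _ _] : is_mpinv M (mpinv M).
  apply: (xgetPex 0); exists X; split.
  - by rewrite MX mul1mx.
  - by rewrite -mulmxA MX mulmx1.
  - by rewrite MX trmx1.
  - by rewrite !trmx_mul trmxK trmx_inv trmx_mul trmxK mulmxA.
by rewrite -[LHS]mulmx1 -MX mulmxA MXM.
Qed.

Lemma expr_mul_lt1 (R : realType) (q K : R) :
  `|q| < 1 -> exists k, q ^+ k * K < 1.
Proof.
move=> q_lt1.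
have /cvgr0_norm_lt/(_ 1 ltr01) [k _ qkK] :
    ((fun k => q ^+ k * K) @ \oo --> 0)%classic.
  by rewrite -(mul0r K); apply: cvgMl; exact: cvg_expr.
by exists k; apply: le_lt_trans (qkK k (leqnn k)); exact: ler_norm.
Qed.

(* Makes [banach_fixed_point] applicable to matrices: their complete
   structure is otherwise not found from the normed-module one. *)
HB.instance Definition _ (R : realType) m n := Complete.on 'M[R]_(m, n).

Section contraction.
Variables (R : realType) (p : \bar R) (n : nat).
Hypothesis p_ge1 : (1 <= p)%E.
Variables (T : 'cV[R]_n -> 'cV[R]_n) (q : R).
Hypotheses (q_ge0 : 0 <= q) (q_lt1 : q < 1).
Hypothesis T_lipschitz :
  forall x y, vpnorm p (T x - T y) <= q * vpnorm p (x - y).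

Lemma iter_lipschitz j x y :
  vpnorm p (iter j T x - iter j T y) <= q ^+ j * vpnorm p (x - y).
Proof.
elim: j x y => [|j IH] x y /=; first by rewrite mul1r.
by rewrite exprS -mulrA (le_trans (T_lipschitz _ _)) // ler_wpM2l.
Qed.

Lemma vpnorm_contraction_fixpoint :
  exists z, z = T z /\ forall y, y = T y -> y = z.
Proof.
have [K K_ge0 vpnormK] := vpnorm_le_mx_norm p_ge1 n.
have [k qkK_lt1] : exists k, q ^+ k * K < 1.
  by apply: expr_mul_lt1; rewrite ger0_norm.
pose Tk : {fun [set: 'cV[R]_n] >-> [set: 'cV[R]_n]} :=
  totalfun_ setT (iter k T).
have Tk_contraction : is_contraction Tk.
  have qkK_ge0 : 0 <= q ^+ k * K by rewrite mulr_ge0 ?exprn_ge0.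
  exists (NngNum qkK_ge0); split => // -[x y] _ /=; rewrite /totalfun_.
  rewrite (le_trans (mx_norm_le_vpnorm p_ge1 _)) //.
  rewrite (le_trans (iter_lipschitz k x y)) //.
  by rewrite -mulrA ler_wpM2l ?exprn_ge0.
have Tk_unique y z : y = iter k T y -> z = iter k T z -> y = z.
  exact: (contraction_fixpoint_unique Tk_contraction).
have [z _ zTk] := banach_fixed_point Tk_contraction closedT (ex_intro _ 0 I).
exists z; split => [|y yT].
  by apply: Tk_unique (zTk) _; rewrite -iterSr iterS -zTk.
by apply: Tk_unique (zTk); rewrite iter_fix // -yT.
Qed.

End contraction.

Section splitting_iteration.
Variables (R : realType) (m n : nat).
Variables (X : 'M[R]_(n, m)) (N B : 'M[R]_(m, n)) (b : 'cV[R]_m).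

Definition splitting_map (x : 'cV[R]_n) := X *m (N *m x + B *m absv x + b).

Lemma splitting_mapB x y : splitting_map x - splitting_map y =
  (X *m N) *m (x - y) + (X *m B) *m (absv x - absv y).
Proof.
rewrite /splitting_map -mulmxBr -!mulmxA -mulmxDr; congr (X *m _).
by rewrite !mulmxBr opprD addrACA subrr addr0 opprD addrACA.
Qed.

Lemma splitting_map_lipschitz p : (1 <= p)%E -> forall x y,
  vpnorm p (splitting_map x - splitting_map y) <=
  (opnorm p (X *m N) + opnorm p (X *m B)) * vpnorm p (x - y).
Proof.
move=> p_ge1 x y; rewrite splitting_mapB mulrDl.
rewrite (le_trans (ler_vpnormD p_ge1 _ _)) // lerD ?ler_opnorm //.
rewrite (le_trans (ler_opnorm p_ge1 _ _)) // ler_wpM2l ?opnorm_ge0 //.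
exact: vpnorm_absvB.
Qed.

Lemma splitting_fixpoint_solves (M : 'M[R]_(m, n)) x :
  M *m X = 1%:M -> x = splitting_map x -> (M - N) *m x - B *m absv x = b.
Proof.
move=> MX xT; have Mx : M *m x = N *m x + B *m absv x + b.
  by rewrite {1}xT mulmxA MX mul1mx.
by rewrite mulmxBl Mx [_ + b]addrC -addrA -opprD addrK.
Qed.

End splitting_iteration.

Theorem theorem3p1 (R : realType) (m n : nat) (p : \bar R)
  (A B MA NA : 'M[R]_(m, n)) :
  (m < n)%N -> (1 <= p)%E -> A = MA - NA -> \rank MA = m ->
  opnorm p (mpinv MA *m NA) + opnorm p (mpinv MA *m B) < 1 ->
  forall b : 'cV[R]_m,
    exists x : 'cV[R]_n,
      [/\ x = mpinv MA *m (NA *m x + B *m absv x + b),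
          A *m x - B *m absv x = b &
          forall y : 'cV[R]_n,
            y = mpinv MA *m (NA *m y + B *m absv y + b) -> y = x].
Proof.
move=> _ p_ge1 -> rankMA q_lt1 b.
have q_ge0 : 0 <= opnorm p (mpinv MA *m NA) + opnorm p (mpinv MA *m B).
  by rewrite addr_ge0 ?opnorm_ge0.
have [x [xT x_unique]] := vpnorm_contraction_fixpoint p_ge1 q_ge0 q_lt1
  (splitting_map_lipschitz (mpinv MA) NA B b p_ge1).
exists x; split => //.
apply: splitting_fixpoint_solves xT.
by apply: mulmx_mpinv; rewrite /row_free rankMA.
Qed.
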